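(* Let $G$ be the two-player game with $A_i=\{a_{i1},a_{i2}\}$ and $\pi(a_{11},a_{21})=(5,5)$, $\pi(a_{11},a_{22})=(0,0)$, $\pi(a_{12},a_{21})=(0,0)$, $\pi(a_{12},a_{22})=(5,10)$. Then for every $p\in(0,1)$, the pure profile $(a_{11},a_{21})$ is stable for the degree of observability $p$ (although it is Pareto dominated by $(a_{12},a_{22})$).
   Context: Preference types: $\Theta=\mathbb{R}^A$, $A=A_1\times A_2$ (extended bilinearly; $\pi_i$ likewise). $\mathcal{M}(\Theta^2)$: product distributions $\mu=\mu_1\times\mu_2$ with finitely supported marginals; $\mu(\theta)=\mu_1(\theta_1)\mu_2(\theta_2)$, $\mu_{-i}=\mu_j$ ($j\ne i$). Mutants: for nonempty $J\subseteq N=\{1,2\}$, $\tilde\theta_J\in\prod_{j\in J}(\Theta\setminus\operatorname{supp}\mu_j)$ with shares $\varepsilon\in(0,1)^{|J|}$, $\|\varepsilon\|=\max_j\varepsilon_j$; post-entry $\tilde\mu^\varepsilon_i=(1-\varepsilon_i)\mu_i+\varepsilon_i\delta_{\tilde\theta_i}$ for $i\in J$, $\mu_i$ otherwise. Partial observability with degree $p\in(0,1)$: each player independently observes opponents' types with probability $p$ and otherwise knows only $\mu_{-i}$. Strategies: $b:\operatorname{supp}\mu\to\prod_i\Delta(A_i)$ (play when observing) and $s_i:\operatorname{supp}\mu_i\to\Delta(A_i)$ (play when not observing), $s(\theta)=(s_i(\theta_i))_i$. For a matched profile $\theta$ and the set $T\subseteq N$ of non-observing players, the profile played is $(s(\theta)_T,b(\theta)_{-T})$.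 $(b,s)$ is an equilibrium if for all $\theta\in\operatorname{supp}\mu$ and $i$: $b_i(\theta)\in\arg\max_{\sigma_i}\sum_{T\subseteq N\setminus\{i\}}p^{n-1-|T|}(1-p)^{|T|}\theta_i(\sigma_i,(s_{-i}(\theta_{-i})_T,b_{-i}(\theta)_{-T}))$ and $s_i(\theta_i)\in\arg\max_{\sigma_i}\sum_{\theta'_{-i}}\mu_{-i}(\theta'_{-i})\sum_{T\subseteq N\setminus\{i\}}p^{n-1-|T|}(1-p)^{|T|}\theta_i(\sigma_i,(s_{-i}(\theta'_{-i})_T,b_{-i}(\theta_i,\theta'_{-i})_{-T}))$ (here $n=2$); $B_p(\mu)$ is the set of these; $(\mu,b,s)$ is a configuration. Aggregate outcome: $\varphi_{\mu,b,s}(a)=\sum_{\theta}\mu(\theta)\sum_{T\subseteq N}p^{n-|T|}(1-p)^{|T|}\prod_i(s(\theta)_T,b(\theta)_{-T})_i(a_i)$. Average fitness: $\Pi_{\theta_i}(\mu;b,s)=\sum_{\theta'_{-i}}\mu_{-i}(\theta'_{-i})\sum_{T\subseteq N}p^{n-|T|}(1-p)^{|T|}\pi_i(s(\theta_i,\theta'_{-i})_T,b(\theta_i,\theta'_{-i})_{-T})$. Balanced: equal average fitness of all types within each population. Nearby set: $B_p^\eta(\tilde\mu^\varepsilon;b,s)=\{(\tilde b,\tilde s)\in B_p(\tilde\mu^\varepsilon):\max_i\|\tilde b_i(\theta)-b_i(\theta)\|\le\eta,\ \max_i\|\tilde s_i(\theta_i)-s_i(\theta_i)\|\le\eta\ \forall\theta\in\operatorname{supp}\mu\}$.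 $(\mu,b,s)$ is stable (for degree $p$) if balanced and for every nonempty $J$, every $\tilde\theta_J$, every $\eta>0$, there are $\bar\eta\in[0,\eta)$, $\bar\epsilon\in(0,1)$ such that for all $\varepsilon$ with $\|\varepsilon\|\in(0,\bar\epsilon)$, $B_p^{\bar\eta}(\tilde\mu^\varepsilon;b,s)\ne\emptyset$ and each of its elements satisfies (i) some $j\in J$ has $\Pi_{\theta_j}>\Pi_{\tilde\theta_j}$ (post-entry) for all $\theta_j\in\operatorname{supp}\mu_j$, or (ii) for every $i$ all types in $\operatorname{supp}\tilde\mu^\varepsilon_i$ have equal post-entry average fitness. A pure profile $a^*$ is stable for degree $p$ if the point mass at $a^*$ is the aggregate outcome of a stable configuration for $p$. *)

From Stdlib Require Import Reals List.
Open Scope R_scope.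

(* Two players; player i's actions are a_{i1} = x1 and a_{i2} = x2. *)
Inductive player := P1 | P2.
Definition other (i : player) : player := match i with P1 => P2 | P2 => P1 end.
Definition peqb (i j : player) : bool :=
  match i, j with P1, P1 | P2, P2 => true | _, _ => false end.

Inductive act := x1 | x2.
Definition act_eqb (a b : act) : bool :=
  match a, b with x1, x1 | x2, x2 => true | _, _ => false end.

(* Preference types: Theta = R^A with A = A_1 x A_2; u a1 a2 = u(a1,a2). *)
Definition Theta := act -> act -> R.

Definition mixed := act -> R.
Definition in_simplex (sg : mixed) : Prop :=
  0 <= sg x1 /\ 0 <= sg x2 /\ sg x1 + sg x2 = 1.
Definition mdist (sg tau : mixed) : R :=
  Rmax (Rabs (sg x1 - tau x1)) (Rabs (sg x2 - tau x2)).

Definition mprof := player -> mixed.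
Definition ext (u : Theta) (sg : mprof) : R :=
  sg P1 x1 * sg P2 x1 * u x1 x1 + sg P1 x1 * sg P2 x2 * u x1 x2
  + sg P1 x2 * sg P2 x1 * u x2 x1 + sg P1 x2 * sg P2 x2 * u x2 x2.
Definition prof (i : player) (sg tau : mixed) : mprof :=
  fun k => if peqb k i then sg else tau.

Definition tc (th : Theta * Theta) (i : player) : Theta :=
  match i with P1 => fst th | P2 => snd th end.
Definition tpair (i : player) (ti tj : Theta) : Theta * Theta :=
  match i with P1 => (ti, tj) | P2 => (tj, ti) end.

(* finitely supported distributions on Theta: list of (type, weight) *)
Definition dist := list (Theta * R).
Definition supp (d : dist) : list Theta := map fst d.
Fixpoint Esum (d : dist) (f : Theta -> R) : R :=
  match d with nil => 0 | (t, w) :: d' => w * f t + Esum d' f end.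
Definition valid_dist (d : dist) : Prop :=
  NoDup (supp d) /\ Forall (fun tw => 0 < snd tw) d /\ Esum d (fun _ => 1) = 1.
(* product distribution mu = mu_1 x mu_2, given by its marginals *)
Definition pop := player -> dist.
Definition valid_pop (mu : pop) : Prop := valid_dist (mu P1) /\ valid_dist (mu P2).

(* strategies: b : supp mu -> prod_i Delta(A_i), s_i : supp mu_i -> Delta(A_i) *)
Definition bstrat := Theta * Theta -> player -> mixed.
Definition sstrat := player -> Theta -> mixed.

Definition ow (p : R) (o : bool) : R := if o then p else 1 - p.
Definition sum2 (f : bool -> R) : R := f true + f false.
Definition sum4 (f : bool -> bool -> R) : R :=
  f true true + f true false + f false true + f false false.
Definition obsf (o1 o2 : bool) : player -> bool :=
  fun k => match k with P1 => o1 | P2 => o2 end.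
Definition played (b : bstrat) (s : sstrat) (th : Theta * Theta)
  (o : player -> bool) : mprof :=
  fun k => if o k then b th k else s k (tc th k).

Definition U_obs (p : R) (b : bstrat) (s : sstrat) (th : Theta * Theta)
  (i : player) (sg : mixed) : R :=
  sum2 (fun o => ow p o * ext (tc th i)
    (prof i sg (if o then b th (other i) else s (other i) (tc th (other i))))).
Definition U_nobs (p : R) (mu : pop) (b : bstrat) (s : sstrat)
  (i : player) (ti : Theta) (sg : mixed) : R :=
  Esum (mu (other i)) (fun tj => U_obs p b s (tpair i ti tj) i sg).

Definition is_eq (p : R) (mu : pop) (b : bstrat) (s : sstrat) : Prop :=
  (forall t1 t2, In t1 (supp (mu P1)) -> In t2 (supp (mu P2)) ->
     forall i, in_simplex (b (t1, t2) i) /\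
       (forall sg, in_simplex sg ->
          U_obs p b s (t1, t2) i sg <= U_obs p b s (t1, t2) i (b (t1, t2) i)))
  /\
  (forall i ti, In ti (supp (mu i)) ->
     in_simplex (s i ti) /\
     (forall sg, in_simplex sg ->
        U_nobs p mu b s i ti sg <= U_nobs p mu b s i ti (s i ti))).

Definition agg (p : R) (mu : pop) (b : bstrat) (s : sstrat) (a1 a2 : act) : R :=
  Esum (mu P1) (fun t1 => Esum (mu P2) (fun t2 =>
    sum4 (fun o1 o2 => ow p o1 * ow p o2 *
      (played b s (t1, t2) (obsf o1 o2) P1 a1 *
       played b s (t1, t2) (obsf o1 o2) P2 a2)))).

Definition fitness (pi : player -> Theta) (p : R) (mu : pop) (b : bstrat)
  (s : sstrat) (i : player) (ti : Theta) : R :=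
  Esum (mu (other i)) (fun tj =>
    sum4 (fun o1 o2 => ow p o1 * ow p o2 *
      ext (pi i) (played b s (tpair i ti tj) (obsf o1 o2)))).

Definition balanced (pi : player -> Theta) (p : R) (mu : pop) (b : bstrat)
  (s : sstrat) : Prop :=
  forall i t t', In t (supp (mu i)) -> In t' (supp (mu i)) ->
    fitness pi p mu b s i t = fitness pi p mu b s i t'.

Definition entrant (d : dist) (t : Theta) (e : R) : dist :=
  (t, e) :: map (fun tw => (fst tw, (1 - e) * snd tw)) d.
Definition post (mu : pop) (J : player -> bool) (tt : player -> Theta)
  (eps : player -> R) : pop :=
  fun i => if J i then entrant (mu i) (tt i) (eps i) else mu i.

Definition nearby (p : R) (mu' mu : pop) (b : bstrat) (s : sstrat) (eta : R)
  (b' : bstrat) (s' : sstrat) : Prop :=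
  is_eq p mu' b' s' /\
  forall t1 t2, In t1 (supp (mu P1)) -> In t2 (supp (mu P2)) ->
    forall i, mdist (b' (t1, t2) i) (b (t1, t2) i) <= eta /\
              mdist (s' i (tc (t1, t2) i)) (s i (tc (t1, t2) i)) <= eta.

Definition stable (pi : player -> Theta) (p : R) (mu : pop) (b : bstrat)
  (s : sstrat) : Prop :=
  balanced pi p mu b s /\
  forall (J : player -> bool) (tt : player -> Theta),
    (exists j, J j = true) ->
    (forall j, J j = true -> ~ In (tt j) (supp (mu j))) ->
    forall eta, 0 < eta ->
      exists etab epsb, 0 <= etab < eta /\ 0 < epsb < 1 /\
        forall eps : player -> R,
          (forall j, J j = true -> 0 < eps j < 1) ->
          (forall j, J j = true -> eps j < epsb) ->
          (exists b' s', nearby p (post mu J tt eps) mu b s etab b' s') /\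
          (forall b' s', nearby p (post mu J tt eps) mu b s etab b' s' ->
             (exists j, J j = true /\
                forall tj, In tj (supp (mu j)) ->
                  fitness pi p (post mu J tt eps) b' s' j tj >
                  fitness pi p (post mu J tt eps) b' s' j (tt j))
             \/
             (forall i t t', In t (supp (post mu J tt eps i)) ->
                In t' (supp (post mu J tt eps i)) ->
                fitness pi p (post mu J tt eps) b' s' i t =
                fitness pi p (post mu J tt eps) b' s' i t')).

Definition stable_pure (pi : player -> Theta) (p : R) (a1 a2 : act) : Prop :=
  exists (mu : pop) (b : bstrat) (s : sstrat),
    valid_pop mu /\ is_eq p mu b s /\ stable pi p mu b s /\
    forall c1 c2, agg p mu b s c1 c2 =
      (if andb (act_eqb c1 a1) (act_eqb c2 a2) then 1 else 0).

Definition G (i : player) : Theta :=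
  match i with
  | P1 => fun a1 a2 => match a1, a2 with
          | x1, x1 => 5 | x1, x2 => 0 | x2, x1 => 0 | x2, x2 => 5 end
  | P2 => fun a1 a2 => match a1, a2 with
          | x1, x1 => 5 | x1, x2 => 0 | x2, x1 => 0 | x2, x2 => 10 end
  end.

From Stdlib Require Import Reals List Lra Psatz ClassicalDescription.
Open Scope R_scope.

(* The incumbents are types for which [x1] is strictly dominant, so in every
   equilibrium of every post-entry population they play [x1], observing or not.
   A post-entry equilibrium agreeing with the original one on incumbents is
   obtained by letting mutants best reply to [x1] against incumbents and play an
   equilibrium of the induced 2x2 game against each other. A mutant facing only
   incumbents earns at most their payoff 5. When both populations are invaded,
   the mutants can profit only by coordinating on [(x2, x2)], which needs
   observation, since an unobserving mutant cannot tell mutants from incumbents.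
   If the mutants of player 1 do not lose, they miscoordinate with mutants of
   player 2 less often than those play [x2] against incumbents, and then the
   mutants of player 2 lose. *)

Lemma Esum_linear d f g h a b : (forall t, f t = a * g t + b * h t) ->
  Esum d f = a * Esum d g + b * Esum d h.
Proof. intro H; induction d as [|[t w] d IH]; simpl; [ring|]. rewrite IH, H; ring. Qed.

Lemma Esum_minus d f g : Esum d f - Esum d g = Esum d (fun t => f t - g t).
Proof. induction d as [|[t w] d IH]; simpl; [ring|]. rewrite <- IH; ring. Qed.

Lemma Esum_const d c : Esum d (fun _ => c) = c * Esum d (fun _ => 1).
Proof. induction d as [|[t w] d IH]; simpl; [ring|]. rewrite IH; ring. Qed.

Lemma Esum_ext_in d f g : (forall t, In t (supp d) -> f t = g t) -> Esum d f = Esum d g.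
Proof.
  induction d as [|[t w] d IH]; simpl; intros H; auto.
  rewrite H, IH by auto. reflexivity.
Qed.

Lemma Esum_entrant d t e f : Esum (entrant d t e) f = e * f t + (1 - e) * Esum d f.
Proof.
  unfold entrant; simpl. f_equal.
  induction d as [|[t' w] d IH]; simpl; [ring|]. rewrite IH; ring.
Qed.

Definition mix (q : R) : mixed := fun a => match a with x1 => 1 - q | x2 => q end.

Lemma mix_in_simplex q : 0 <= q <= 1 -> in_simplex (mix q).
Proof. unfold in_simplex, mix; lra. Qed.

Lemma in_simplex_x1 m : in_simplex m -> m x1 = 1 - m x2.
Proof. unfold in_simplex; lra. Qed.

Lemma in_simplex_x2 m : in_simplex m -> 0 <= m x2 <= 1.
Proof. unfold in_simplex; lra. Qed.

Lemma ext_prof_linear t i sg tau : ext t (prof i sg tau) =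
  sg x1 * ext t (prof i (mix 0) tau) + sg x2 * ext t (prof i (mix 1) tau).
Proof. destruct i; unfold ext, prof, mix; simpl; ring. Qed.

Definition switch_gain (i : player) (t : Theta) (y : R) : R :=
  ext t (prof i (mix 1) (mix y)) - ext t (prof i (mix 0) (mix y)).
Arguments switch_gain : simpl never.

Lemma switch_gain_affine i t y :
  switch_gain i t y = switch_gain i t 0 + y * (switch_gain i t 1 - switch_gain i t 0).
Proof. destruct i; unfold switch_gain, ext, prof, mix; simpl; ring. Qed.

Lemma switch_gain_mix p i t y z :
  p * switch_gain i t y + (1 - p) * switch_gain i t z = switch_gain i t (p * y + (1 - p) * z).
Proof.
  rewrite (switch_gain_affine i t y), (switch_gain_affine i t z),
    (switch_gain_affine i t (p * y + (1 - p) * z)); ring.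
Qed.

(** * Best replies in a two-action game *)

(* [q] is a best weight on [x2] when switching to [x2] gains [g]. *)
Definition best_weight (q g : R) : Prop := (1 - q) * g <= 0 /\ q * - g <= 0.

Lemma best_weight_maximizes (F : mixed -> R) q :
  (forall sg, F sg = sg x1 * F (mix 0) + sg x2 * F (mix 1)) -> 0 <= q <= 1 ->
  best_weight q (F (mix 1) - F (mix 0)) -> forall sg, in_simplex sg -> F sg <= F (mix q).
Proof.
  intros HF Hq [H1 H2] sg [S1 [S2 S3]].
  rewrite (HF sg), (HF (mix q)); cbn [mix].
  set (g := F (mix 1) - F (mix 0)) in *.
  replace (F (mix 1)) with (F (mix 0) + g) by (unfold g; ring).
  destruct (Rlt_le_dec 0 g); [assert (q = 1) by nra|]; nra.
Qed.

Lemma best_weight_scale q g c : 0 <= c -> 0 <= q <= 1 -> best_weight q g -> best_weight q (c * g).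
Proof. unfold best_weight; intros; split; nra. Qed.

Definition sign_weight (x : R) : R := if Rlt_dec 0 x then 1 else 0.
Arguments sign_weight : simpl never.

Lemma sign_weight_bounds x : 0 <= sign_weight x <= 1.
Proof. unfold sign_weight; destruct (Rlt_dec 0 x); lra. Qed.

Lemma best_weight_sign x : best_weight (sign_weight x) x.
Proof. unfold sign_weight, best_weight; destruct (Rlt_dec 0 x); lra. Qed.

Lemma best_weight_sign_perturbed x d :
  x <> 0 -> Rabs d < Rabs x -> best_weight (sign_weight x) (x + d).
Proof.
  intros Hx Hd. unfold sign_weight, best_weight. destruct (Rlt_dec 0 x).
  - rewrite (Rabs_right x) in Hd by lra. pose proof (Rle_abs (- d)). rewrite Rabs_Ropp in *. lra.
  - rewrite (Rabs_left x) in Hd by lra. pose proof (Rle_abs d). lra.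
Qed.

Lemma best_weight_zero q : best_weight q 0.
Proof. unfold best_weight; lra. Qed.

Lemma affine_root_in_unit al be : al * (al + be) <= 0 -> be <> 0 ->
  0 <= - al / be <= 1 /\ al + be * (- al / be) = 0.
Proof.
  intros Hs Hbe. set (r := - al / be).
  assert (Hal : al = - be * r) by (unfold r; field; auto).
  assert (Hbb : 0 < be * be) by (destruct (Rlt_dec 0 be); nra).
  assert (Hr : 0 <= r * (1 - r)).
  { apply (Rmult_le_reg_l (be * be)); [exact Hbb|]. rewrite Hal in Hs. nra. }
  split; [split|]; nra.
Qed.

(* A 2x2 game whose switching gains are affine in the opponent's weight has an
   equilibrium: pure unless both gains change sign on [0, 1]. *)
Lemma best_weight_fixed_point al be ga de : exists a b, 0 <= a <= 1 /\ 0 <= b <= 1 /\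
  best_weight a (al + be * b) /\ best_weight b (ga + de * a).
Proof.
  assert (Interior : al * (al + be) < 0 -> ga * (ga + de) <= 0 -> de <> 0 ->
    exists a b, 0 <= a <= 1 /\ 0 <= b <= 1 /\
      best_weight a (al + be * b) /\ best_weight b (ga + de * a)).
  { intros Ha Hg Hde. assert (Hbe : be <> 0) by (intros ->; nra).
    destruct (affine_root_in_unit ga de Hg Hde) as [Ra Za].
    destruct (affine_root_in_unit al be ltac:(lra) Hbe) as [Rb Zb].
    exists (- ga / de), (- al / be). rewrite Za, Zb. auto using best_weight_zero. }
  pose proof (best_weight_sign (al + be)); pose proof (sign_weight_bounds (al + be)).
  pose proof (best_weight_sign al); pose proof (sign_weight_bounds al).
  unfold best_weight in *.
  destruct (Rle_lt_dec 0 ga); destruct (Rle_lt_dec 0 (ga + de)).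
  - exists (sign_weight (al + be)), 1. repeat split; nra.
  - destruct (Rle_lt_dec (al + be) 0); [exists 0, 1; repeat split; lra|].
    destruct (Rle_lt_dec 0 al); [exists 1, 0; repeat split; lra|].
    apply Interior; nra.
  - destruct (Rle_lt_dec al 0); [exists 0, 0; repeat split; lra|].
    destruct (Rle_lt_dec 0 (al + be)); [exists 1, 1; repeat split; lra|].
    apply Interior; nra.
  - exists (sign_weight al), 0. repeat split; nra.
Qed.

Lemma U_obs_linear p b s th i sg : U_obs p b s th i sg =
  sg x1 * U_obs p b s th i (mix 0) + sg x2 * U_obs p b s th i (mix 1).
Proof. unfold U_obs, sum2. rewrite 2!(ext_prof_linear (tc th i) i sg). ring. Qed.

Lemma U_nobs_linear p mu b s i ti sg : U_nobs p mu b s i ti sg =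
  sg x1 * U_nobs p mu b s i ti (mix 0) + sg x2 * U_nobs p mu b s i ti (mix 1).
Proof. apply Esum_linear; intro; apply U_obs_linear. Qed.

Lemma U_obs_switch p b s th i yo yn :
  b th (other i) = mix yo -> s (other i) (tc th (other i)) = mix yn ->
  U_obs p b s th i (mix 1) - U_obs p b s th i (mix 0) =
  p * switch_gain i (tc th i) yo + (1 - p) * switch_gain i (tc th i) yn.
Proof. intros Eo En. unfold U_obs, sum2, ow. rewrite Eo, En. unfold switch_gain. ring. Qed.

Lemma U_nobs_switch p mu b s i ti :
  U_nobs p mu b s i ti (mix 1) - U_nobs p mu b s i ti (mix 0) =
  Esum (mu (other i)) (fun tj =>
    U_obs p b s (tpair i ti tj) i (mix 1) - U_obs p b s (tpair i ti tj) i (mix 0)).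
Proof. apply Esum_minus. Qed.

Lemma best_reply_observed p b s th i q : b th i = mix q -> 0 <= q <= 1 ->
  best_weight q (U_obs p b s th i (mix 1) - U_obs p b s th i (mix 0)) ->
  in_simplex (b th i) /\
  forall sg, in_simplex sg -> U_obs p b s th i sg <= U_obs p b s th i (b th i).
Proof.
  intros E Hq H. rewrite E. split; [now apply mix_in_simplex|].
  apply best_weight_maximizes; auto. intro; apply U_obs_linear.
Qed.

Lemma best_reply_unobserved p mu b s i ti q : s i ti = mix q -> 0 <= q <= 1 ->
  best_weight q (U_nobs p mu b s i ti (mix 1) - U_nobs p mu b s i ti (mix 0)) ->
  in_simplex (s i ti) /\
  forall sg, in_simplex sg -> U_nobs p mu b s i ti sg <= U_nobs p mu b s i ti (s i ti).
Proof.
  intros E Hq H. rewrite E. split; [now apply mix_in_simplex|].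
  apply best_weight_maximizes; auto. intro; apply U_nobs_linear.
Qed.

(** * The incumbent population *)

Definition x1_dominant (i : player) : Theta := fun a1 a2 =>
  match (match i with P1 => a1 | P2 => a2 end) with x1 => 1 | x2 => 0 end.

Definition incumbents : pop := fun i => (x1_dominant i, 1) :: nil.
Definition b_x1 : bstrat := fun _ _ => mix 0.
Definition s_x1 : sstrat := fun _ _ => mix 0.

Lemma switch_gain_x1_dominant i y : switch_gain i (x1_dominant i) y = -1.
Proof. destruct i; unfold switch_gain, ext, prof, mix, x1_dominant; simpl; ring. Qed.

Lemma U_obs_x1_dominant p b s th i sg : tc th i = x1_dominant i ->
  in_simplex (b th (other i)) -> in_simplex (s (other i) (tc th (other i))) ->
  U_obs p b s th i sg = sg x1.
Proof.
  intros E So Sn. unfold U_obs, sum2, ow. rewrite E.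
  generalize dependent (s (other i) (tc th (other i))).
  generalize dependent (b th (other i)).
  intros A SA B SB. apply in_simplex_x1 in SA, SB.
  destruct i; unfold ext, prof, x1_dominant; cbn; rewrite SA, SB; ring.
Qed.

Lemma eq_observed_x1_dominant p mu b s t1 t2 i : is_eq p mu b s ->
  In t1 (supp (mu P1)) -> In t2 (supp (mu P2)) -> tc (t1, t2) i = x1_dominant i ->
  b (t1, t2) i x2 = 0.
Proof.
  intros [Ho Hn] H1 H2 E.
  destruct (Ho t1 t2 H1 H2 i) as [Si Bi]. destruct (Ho t1 t2 H1 H2 (other i)) as [So _].
  assert (Ht : In (tc (t1, t2) (other i)) (supp (mu (other i)))) by (destruct i; assumption).
  destruct (Hn _ _ Ht) as [Sn _].
  pose proof (Bi (mix 0) (mix_in_simplex 0 ltac:(lra))) as B.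
  rewrite !(U_obs_x1_dominant p b s (t1, t2) i) in B by assumption.
  unfold in_simplex, mix in *. lra.
Qed.

Lemma eq_unobserved_x1_dominant p mu b s i : is_eq p mu b s ->
  In (x1_dominant i) (supp (mu i)) -> Esum (mu (other i)) (fun _ => 1) = 1 ->
  s i (x1_dominant i) x2 = 0.
Proof.
  intros [Ho Hn] H W. destruct (Hn i _ H) as [Si Bi].
  assert (U : forall sg, U_nobs p mu b s i (x1_dominant i) sg = sg x1).
  { intro sg. unfold U_nobs.
    rewrite (Esum_ext_in _ _ (fun _ => sg x1)), Esum_const, W; [ring|].
    intros tj Hj. apply U_obs_x1_dominant; [destruct i; reflexivity | |].
    - destruct i; [apply (Ho _ _ H Hj) | apply (Ho _ _ Hj H)].
    - apply (Hn (other i)). destruct i; assumption. }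
  pose proof (Bi (mix 0) (mix_in_simplex 0 ltac:(lra))) as B. rewrite !U in B.
  unfold in_simplex, mix in *. lra.
Qed.

Lemma incumbents_valid : valid_pop incumbents.
Proof.
  unfold valid_pop, valid_dist, incumbents, supp; simpl.
  repeat split; repeat constructor; simpl; auto; lra.
Qed.

Lemma incumbents_eq p : is_eq p incumbents b_x1 s_x1.
Proof.
  assert (R0 : 0 <= 0 <= 1) by lra. split.
  - intros t1 t2 H1 H2 i. cbn in H1, H2. destruct H1 as [<-|[]], H2 as [<-|[]].
    apply best_reply_observed with 0; [reflexivity | exact R0 |].
    erewrite U_obs_switch by reflexivity.
    destruct i; cbn [tc fst snd]; rewrite !switch_gain_x1_dominant; unfold best_weight; lra.
  - intros i ti H. cbn in H. destruct H as [<-|[]].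
    apply best_reply_unobserved with 0; [reflexivity | exact R0 |].
    rewrite U_nobs_switch. unfold incumbents.
    destruct i; cbn [Esum other tpair]; erewrite U_obs_switch by reflexivity;
    cbn [tc fst snd]; rewrite !switch_gain_x1_dominant; unfold best_weight; lra.
Qed.

Lemma incumbents_balanced pi p : balanced pi p incumbents b_x1 s_x1.
Proof. intros i t t' H H'. cbn in H, H'. destruct H as [<-|[]], H' as [<-|[]]; reflexivity. Qed.

Lemma incumbents_agg p c1 c2 : agg p incumbents b_x1 s_x1 c1 c2 =
  if andb (act_eqb c1 x1) (act_eqb c2 x1) then 1 else 0.
Proof.
  unfold agg, incumbents, sum4, ow, played, obsf, b_x1, s_x1, mix.
  destruct c1, c2; cbn; ring.
Qed.

(** * An equilibrium after entry *)

Definition is_incumbent (k : player) (t : Theta) : bool :=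
  if excluded_middle_informative (t = x1_dominant k) then true else false.

Lemma is_incumbent_x1_dominant k : is_incumbent k (x1_dominant k) = true.
Proof. unfold is_incumbent; destruct excluded_middle_informative; congruence. Qed.

Lemma is_incumbent_mutant k t : t <> x1_dominant k -> is_incumbent k t = false.
Proof. unfold is_incumbent; destruct excluded_middle_informative; congruence. Qed.

Lemma mdist_self m : mdist m m = 0.
Proof. unfold mdist. rewrite !Rminus_diag_eq, Rabs_R0 by reflexivity. apply Rmax_left; lra. Qed.

Lemma other_involutive i : other (other i) = i.
Proof. now destruct i. Qed.

Lemma player_eq_or_other k i : k = i \/ k = other i.
Proof. destruct k, i; auto. Qed.

Lemma post_supp_cases J tt eps i t : In t (supp (post incumbents J tt eps i)) ->
  t = x1_dominant i \/ (J i = true /\ t = tt i).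
Proof. unfold post, incumbents, entrant, supp; destruct (J i); simpl; intuition. Qed.

Lemma In_post_incumbent J tt eps k :
  In (x1_dominant k) (supp (post incumbents J tt eps k)).
Proof. unfold post, incumbents, entrant, supp. destruct (J k); simpl; auto. Qed.

Lemma In_post_entrant J tt eps k : J k = true ->
  In (tt k) (supp (post incumbents J tt eps k)).
Proof. intros Jk. unfold post. rewrite Jk. simpl; auto. Qed.

Lemma post_weight J tt eps i : (J i = true -> 0 < eps i < 1) ->
  Esum (post incumbents J tt eps i) (fun _ => 1) = 1.
Proof.
  unfold post. destruct (J i); intros; [rewrite Esum_entrant|]; unfold incumbents; simpl; ring.
Qed.

Lemma tc_tpair_self i ti tj : tc (tpair i ti tj) i = ti.
Proof. now destruct i. Qed.

Lemma tc_tpair_other i ti tj : tc (tpair i ti tj) (other i) = tj.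
Proof. now destruct i. Qed.

Section PostEntry.

Variable p : R.
Hypothesis p_range : 0 < p < 1.
Variable tt : player -> Theta.

Definition gain_x1 (i : player) : R := switch_gain i (tt i) 0.

(* Weight on [x2] of an unobserving mutant: it mostly meets incumbents, who play
   [x1]; only when that leaves it indifferent does the weight [w] it uses
   against an observed mutant matter. *)
Definition blind_weight (i : player) (w : R) : R :=
  if Req_EM_T (gain_x1 i) 0 then w else sign_weight (gain_x1 i).

Definition b_weight (w : player -> R) (th : Theta * Theta) (k : player) : R :=
  if is_incumbent k (tc th k) then 0
  else if is_incumbent (other k) (tc th (other k)) then sign_weight (gain_x1 k)
  else w k.

Definition s_weight (w : player -> R) (k : player) (t : Theta) : R :=
  if is_incumbent k t then 0 else blind_weight k (w k).

Definition b_post (w : player -> R) : bstrat := fun th k => mix (b_weight w th k).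
Definition s_post (w : player -> R) : sstrat := fun k t => mix (s_weight w k t).

Definition mutual_gain (i : player) (w : R) : R :=
  switch_gain i (tt i) (p * w + (1 - p) * blind_weight (other i) w).

Lemma blind_weight_bounds i w : 0 <= w <= 1 -> 0 <= blind_weight i w <= 1.
Proof. unfold blind_weight; destruct Req_EM_T; auto using sign_weight_bounds. Qed.

Lemma mutual_gain_affine i : exists al be, forall w, mutual_gain i w = al + be * w.
Proof.
  set (g := switch_gain i (tt i)).
  unfold mutual_gain, blind_weight. fold g. destruct Req_EM_T.
  - exists (g 0), ((g 1 - g 0) * (p + (1 - p))).
    intro w. unfold g; rewrite switch_gain_affine; ring.
  - exists (g 0 + (g 1 - g 0) * ((1 - p) * sign_weight (gain_x1 (other i)))),
      ((g 1 - g 0) * p).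
    intro w. unfold g; rewrite switch_gain_affine; ring.
Qed.

Lemma mutual_weights_exist : exists w : player -> R, (forall k, 0 <= w k <= 1) /\
  forall k, best_weight (w k) (mutual_gain k (w (other k))).
Proof.
  destruct (mutual_gain_affine P1) as [al [be H1]].
  destruct (mutual_gain_affine P2) as [ga [de H2]].
  destruct (best_weight_fixed_point al be ga de) as [a [b [Ha [Hb [Ba Bb]]]]].
  exists (fun k => match k with P1 => a | P2 => b end).
  split; intro k; destruct k; cbn [other]; rewrite ?H1, ?H2; assumption.
Qed.

(* How small an entrant share must be for [blind_weight] to stay a best reply. *)
Definition entry_tolerance (i : player) : R :=
  if Req_EM_T (gain_x1 i) 0 then 1
  else Rabs (gain_x1 i) / (Rabs (switch_gain i (tt i) 1 - gain_x1 i) + 1).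

Lemma entry_tolerance_pos i : 0 < entry_tolerance i.
Proof.
  unfold entry_tolerance; destruct Req_EM_T; [lra|].
  pose proof (Rabs_pos (switch_gain i (tt i) 1 - gain_x1 i)).
  apply Rdiv_lt_0_compat; [now apply Rabs_pos_lt | lra].
Qed.

Lemma blind_weight_best_alone i w : best_weight (blind_weight i w) (gain_x1 i).
Proof.
  unfold blind_weight; destruct Req_EM_T as [E|E];
    [rewrite E; apply best_weight_zero | apply best_weight_sign].
Qed.

Lemma blind_weight_best i e y w : 0 < e < entry_tolerance i -> 0 <= y <= 1 -> 0 <= w <= 1 ->
  best_weight w (switch_gain i (tt i) y) ->
  best_weight (blind_weight i w) (e * switch_gain i (tt i) y + (1 - e) * gain_x1 i).
Proof.
  intros He Hy Hw Bw. unfold blind_weight, entry_tolerance in *.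
  rewrite (switch_gain_affine i (tt i) y) in *. fold (gain_x1 i) in *.
  set (S := switch_gain i (tt i) 1 - gain_x1 i) in *.
  replace (e * (gain_x1 i + y * S) + (1 - e) * gain_x1 i) with (gain_x1 i + e * (y * S)) by ring.
  destruct Req_EM_T as [E|E].
  - rewrite E, Rplus_0_l in *. apply best_weight_scale; [lra | lra | exact Bw].
  - apply best_weight_sign_perturbed; [exact E|].
    pose proof (Rabs_pos S).
    assert (Hb : e * (Rabs S + 1) < Rabs (gain_x1 i)).
    { destruct He as [_ He]. apply (Rmult_lt_compat_r (Rabs S + 1)) in He; [|lra].
      unfold Rdiv in He. rewrite Rmult_assoc, Rinv_l, Rmult_1_r in He; lra. }
    rewrite !Rabs_mult, (Rabs_right e), (Rabs_right y) by lra.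
    assert (y * Rabs S <= Rabs S) by nra.
    nra.
Qed.

Definition obs_gain (w : player -> R) (th : Theta * Theta) (i : player) : R :=
  p * switch_gain i (tc th i) (b_weight w th (other i))
  + (1 - p) * switch_gain i (tc th i) (s_weight w (other i) (tc th (other i))).

Lemma U_obs_post w th i :
  U_obs p (b_post w) (s_post w) th i (mix 1) - U_obs p (b_post w) (s_post w) th i (mix 0)
  = obs_gain w th i.
Proof. now apply U_obs_switch. Qed.

Section Cases.

Variables (w : player -> R) (th : Theta * Theta) (i : player).

Lemma b_weight_incumbent : tc th i = x1_dominant i -> b_weight w th i = 0.
Proof. intros E. unfold b_weight. now rewrite E, is_incumbent_x1_dominant. Qed.

Lemma obs_gain_incumbent : tc th i = x1_dominant i -> obs_gain w th i = -1.
Proof. intros E. unfold obs_gain. rewrite E, !switch_gain_x1_dominant. ring. Qed.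

Hypothesis mutant_i : tc th i = tt i.
Hypothesis mutant_i_new : tt i <> x1_dominant i.

Lemma b_weight_vs_incumbent : tc th (other i) = x1_dominant (other i) ->
  b_weight w th i = sign_weight (gain_x1 i).
Proof.
  intros E. unfold b_weight.
  now rewrite mutant_i, (is_incumbent_mutant _ _ mutant_i_new), E, is_incumbent_x1_dominant.
Qed.

Lemma obs_gain_vs_incumbent : tc th (other i) = x1_dominant (other i) ->
  obs_gain w th i = gain_x1 i.
Proof.
  intros E. unfold obs_gain, s_weight, b_weight.
  rewrite E, is_incumbent_x1_dominant, mutant_i. unfold gain_x1. ring.
Qed.

Hypothesis mutant_o : tc th (other i) = tt (other i).
Hypothesis mutant_o_new : tt (other i) <> x1_dominant (other i).

Lemma b_weight_mutual : b_weight w th i = w i.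
Proof.
  unfold b_weight.
  now rewrite mutant_i, mutant_o, !is_incumbent_mutant by assumption.
Qed.

Lemma obs_gain_mutual : obs_gain w th i = mutual_gain i (w (other i)).
Proof.
  assert (Ho : b_weight w th (other i) = w (other i)).
  { unfold b_weight. rewrite other_involutive, mutant_o, mutant_i.
    now rewrite !is_incumbent_mutant by assumption. }
  unfold obs_gain, s_weight. rewrite Ho, mutant_i, mutant_o, is_incumbent_mutant by assumption.
  apply switch_gain_mix.
Qed.

End Cases.

Definition post_type (k : player) (t : Theta) : Prop :=
  t = x1_dominant k \/ (t = tt k /\ tt k <> x1_dominant k).

Lemma post_supp_type J eps k t : (forall j, J j = true -> tt j <> x1_dominant j) ->
  In t (supp (post incumbents J tt eps k)) -> post_type k t.
Proof.
  intros Hnew H. destruct (post_supp_cases J tt eps k t H) as [E|[Jk E]];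
    [left | right; split; auto]; assumption.
Qed.

Section Equilibrium.

Variables (w : player -> R) (J : player -> bool) (eps : player -> R).
Hypothesis w_range : forall k, 0 <= w k <= 1.
Hypothesis w_best : forall k, best_weight (w k) (mutual_gain k (w (other k))).
Hypothesis tt_new : forall j, J j = true -> tt j <> x1_dominant j.
Hypothesis eps_range : forall j, J j = true -> 0 < eps j < 1.
Hypothesis eps_small : forall j k, J j = true -> eps j < entry_tolerance k.

Lemma post_observed_best th i : post_type i (tc th i) -> post_type (other i) (tc th (other i)) ->
  best_weight (b_weight w th i) (obs_gain w th i).
Proof.
  intros [Ei|[Ei Ni]] Ho.
  - rewrite b_weight_incumbent, obs_gain_incumbent by assumption.
    unfold best_weight; lra.
  - destruct Ho as [Eo|[Eo No]].
    + rewrite b_weight_vs_incumbent, obs_gain_vs_incumbent by assumption.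
      apply best_weight_sign.
    + rewrite b_weight_mutual, obs_gain_mutual by assumption. apply w_best.
Qed.

Lemma post_unobserved_best i ti : In ti (supp (post incumbents J tt eps i)) ->
  best_weight (s_weight w i ti)
    (U_nobs p (post incumbents J tt eps) (b_post w) (s_post w) i ti (mix 1)
     - U_nobs p (post incumbents J tt eps) (b_post w) (s_post w) i ti (mix 0)).
Proof.
  intros H. rewrite U_nobs_switch.
  rewrite (Esum_ext_in _ _ (fun tj => obs_gain w (tpair i ti tj) i))
    by (intros; apply U_obs_post).
  destruct (post_supp_type J eps i ti tt_new H) as [Ei|[Ei Ni]]; subst ti.
  - rewrite (Esum_ext_in _ _ (fun _ => -1))
      by (intros; apply obs_gain_incumbent, tc_tpair_self).
    rewrite Esum_const, post_weight by (intros; apply eps_range; assumption).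
    unfold s_weight. rewrite is_incumbent_x1_dominant. unfold best_weight; lra.
  - unfold s_weight. rewrite is_incumbent_mutant by assumption.
    assert (Vs : obs_gain w (tpair i (tt i) (x1_dominant (other i))) i = gain_x1 i)
      by (apply obs_gain_vs_incumbent; auto using tc_tpair_self, tc_tpair_other).
    unfold post at 1. destruct (J (other i)) eqn:Jo.
    + assert (Vm : obs_gain w (tpair i (tt i) (tt (other i))) i = mutual_gain i (w (other i)))
        by (apply obs_gain_mutual; auto using tc_tpair_self, tc_tpair_other).
      rewrite Esum_entrant. unfold incumbents; cbn [Esum]. rewrite Vs, Vm.
      replace (1 * gain_x1 i + 0) with (gain_x1 i) by ring.
      apply blind_weight_best; [split; auto; apply eps_range; assumption | | auto | apply w_best].
      pose proof (blind_weight_bounds (other i) _ (w_range (other i))).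
      pose proof (w_range (other i)). nra.
    + unfold incumbents; cbn [Esum]. rewrite Vs.
      replace (1 * gain_x1 i + 0) with (gain_x1 i) by ring.
      apply blind_weight_best_alone.
Qed.

Lemma b_weight_bounds th k : 0 <= b_weight w th k <= 1.
Proof.
  unfold b_weight. destruct is_incumbent; [lra|].
  destruct is_incumbent; auto using sign_weight_bounds.
Qed.

Lemma s_weight_bounds k t : 0 <= s_weight w k t <= 1.
Proof. unfold s_weight. destruct is_incumbent; auto using blind_weight_bounds; lra. Qed.

Lemma post_entry_eq : is_eq p (post incumbents J tt eps) (b_post w) (s_post w).
Proof.
  split.
  - intros t1 t2 H1 H2 i.
    apply best_reply_observed with (b_weight w (t1, t2) i);
      [reflexivity | apply b_weight_bounds |].
    rewrite U_obs_post.
    apply post_observed_best; destruct i; eapply post_supp_type; eauto.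
  - intros i ti H.
    apply best_reply_unobserved with (s_weight w i ti);
      [reflexivity | apply s_weight_bounds | now apply post_unobserved_best].
Qed.

Lemma post_entry_nearby :
  nearby p (post incumbents J tt eps) incumbents b_x1 s_x1 0 (b_post w) (s_post w).
Proof.
  split; [exact post_entry_eq|].
  intros t1 t2 H1 H2 i. cbn in H1, H2. destruct H1 as [<-|[]], H2 as [<-|[]].
  assert (Hi : tc (x1_dominant P1, x1_dominant P2) i = x1_dominant i) by now destruct i.
  unfold b_post, s_post, b_x1, s_x1, s_weight.
  rewrite b_weight_incumbent, Hi, is_incumbent_x1_dominant, mdist_self by exact Hi. lra.
Qed.

End Equilibrium.
End PostEntry.

(** * Fitness after entry *)

Definition avg_play (p : R) (b : bstrat) (s : sstrat) (th : Theta * Theta) : mprof :=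
  fun k a => p * b th k a + (1 - p) * s k (tc th k) a.

(* Observations are independent, so a match yields the bilinear payoff of the
   players' average mixtures. *)
Lemma fitness_avg_play pi p mu b s i ti : fitness pi p mu b s i ti =
  Esum (mu (other i)) (fun tj => ext (pi i) (avg_play p b s (tpair i ti tj))).
Proof.
  apply Esum_ext_in; intros.
  unfold sum4, ow, played, obsf, ext, avg_play; cbn. ring.
Qed.

Lemma ext_G_P1 sg : sg P1 x1 = 1 - sg P1 x2 -> sg P2 x1 = 1 - sg P2 x2 ->
  ext (G P1) sg = 5 * ((1 - sg P1 x2) * (1 - sg P2 x2) + sg P1 x2 * sg P2 x2).
Proof. intros E1 E2. unfold ext; cbn. rewrite E1, E2. ring. Qed.

Lemma ext_G_P2 sg : sg P1 x1 = 1 - sg P1 x2 -> sg P2 x1 = 1 - sg P2 x2 ->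
  ext (G P2) sg = 5 * ((1 - sg P1 x2) * (1 - sg P2 x2)) + 10 * (sg P1 x2 * sg P2 x2).
Proof. intros E1 E2. unfold ext; cbn. rewrite E1, E2. ring. Qed.

Lemma ext_G_pure_x1 i k sg : sg P1 x1 = 1 - sg P1 x2 -> sg P2 x1 = 1 - sg P2 x2 ->
  sg k x2 = 0 -> ext (G i) sg = 5 * (1 - sg P1 x2 - sg P2 x2).
Proof.
  intros E1 E2 Ek. destruct i; [rewrite ext_G_P1 | rewrite ext_G_P2]; auto;
    destruct k; rewrite Ek; ring.
Qed.

Definition in_supp (mu : pop) (th : Theta * Theta) : Prop :=
  forall k, In (tc th k) (supp (mu k)).

Lemma in_supp_tpair mu i ti tj : In ti (supp (mu i)) -> In tj (supp (mu (other i))) ->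
  in_supp mu (tpair i ti tj).
Proof. intros Hi Hj k. destruct i, k; assumption. Qed.

Lemma eq_avg_in_simplex p mu b s th k : 0 <= p <= 1 -> is_eq p mu b s -> in_supp mu th ->
  in_simplex (avg_play p b s th k).
Proof.
  intros Hp [Ho Hn] H. destruct th as [t1 t2].
  destruct (Ho t1 t2 (H P1) (H P2) k) as [[B1 [B2 B3]] _].
  destruct (Hn k _ (H k)) as [[S1 [S2 S3]] _].
  unfold in_simplex, avg_play. split; [|split]; nra.
Qed.

Lemma eq_avg_x1_dominant p mu b s th k : is_eq p mu b s -> in_supp mu th ->
  tc th k = x1_dominant k -> Esum (mu (other k)) (fun _ => 1) = 1 ->
  avg_play p b s th k x2 = 0.
Proof.
  intros Heq H E W. destruct th as [t1 t2]. unfold avg_play.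
  rewrite (eq_observed_x1_dominant p mu b s t1 t2 k Heq (H P1) (H P2) E), E.
  rewrite (eq_unobserved_x1_dominant p mu b s k Heq); [ring | |exact W].
  rewrite <- E. apply H.
Qed.

Lemma avg_play_cap p b s th th' k : 0 <= p -> tc th k = tc th' k ->
  b th k x2 <= 1 -> 0 <= b th' k x2 -> avg_play p b s th k x2 <= p + avg_play p b s th' k x2.
Proof. intros Hp E H1 H2. unfold avg_play. rewrite E. nra. Qed.

Lemma fitness_vs_incumbents pi p J tt eps b s i t : J (other i) = false ->
  fitness pi p (post incumbents J tt eps) b s i t =
  ext (pi i) (avg_play p b s (tpair i t (x1_dominant (other i)))).
Proof.
  intros Jo. rewrite fitness_avg_play. unfold post. rewrite Jo.
  unfold incumbents; cbn [Esum]. ring.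
Qed.

Lemma fitness_vs_entrants pi p J tt eps b s i t : J (other i) = true ->
  fitness pi p (post incumbents J tt eps) b s i t =
  eps (other i) * ext (pi i) (avg_play p b s (tpair i t (tt (other i))))
  + (1 - eps (other i)) * ext (pi i) (avg_play p b s (tpair i t (x1_dominant (other i)))).
Proof.
  intros Jo. rewrite fitness_avg_play. unfold post. rewrite Jo, Esum_entrant.
  unfold incumbents; cbn [Esum]. ring.
Qed.

(* Fitness gaps (incumbent minus mutant, divided by 5) when both mutants enter:
   [qi] is mutant [i]'s average weight on [x2] against incumbents, [ri] its
   average weight against the other mutant, and [D] the probability that the
   two mutants miscoordinate. The cap [r2 <= p + q2] holds because mutant 2's
   unobserving play is the same against both kinds of opponents. *)
Lemma mutant_fitness_gaps p e1 e2 q1 q2 r1 r2 :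
  0 < p < 1 -> 0 < e1 < (1 - p) / 4 -> 0 < e2 < 1 / 2 ->
  0 <= q1 -> 0 <= q2 -> 0 <= r1 <= 1 -> 0 <= r2 <= 1 -> r2 <= p + q2 ->
  let D := r1 + r2 - 2 * r1 * r2 in
  let gap1 := (1 - e2) * q1 + e2 * (D - q2) in
  let gap2 := (1 - e1) * q2 - e1 * q1 + e1 * (D - r1 * r2) in
  0 < gap1 \/ 0 < gap2 \/ (gap1 = 0 /\ gap2 = 0).
Proof.
  intros Hp He1 He2 Hq1 Hq2 Hr1 Hr2 Hcap D gap1 gap2.
  assert (HD : r1 * (1 - r2) <= D).
  { assert (0 <= r2 * (1 - r1)) by (apply Rmult_le_pos; lra). unfold D; lra. }
  assert (Hrr : 0 <= r1 * r2 <= r1) by (split; nra).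
  assert (Hmutual : (1 - p) * (r1 * r2) <= D + q2).
  { assert (r1 * (1 - p - q2) <= r1 * (1 - r2)) by (apply Rmult_le_compat_l; lra).
    assert ((1 - p) * (r1 * r2) <= (1 - p) * r1) by (apply Rmult_le_compat_l; lra).
    assert (r1 * q2 <= q2) by nra. lra. }
  destruct (Rlt_le_dec 0 gap1) as [|Hg1]; [now left|].
  assert (Hq : q1 <= q2) by (unfold gap1 in Hg1; nra).
  assert (HDq : D <= q2) by (unfold gap1 in Hg1; nra).
  destruct (Rlt_le_dec 0 q2) as [Hq2pos|Hq2zero].
  - right; left. apply (Rmult_lt_reg_l (1 - p)); [lra|].
    assert (e1 * ((1 - p) * (r1 * r2)) <= e1 * (D + q2)) by (apply Rmult_le_compat_l; lra).
    assert ((1 - p) * e1 * q1 <= (1 - p) * e1 * q2) by (apply Rmult_le_compat_l; nra).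
    assert (p * e1 * D <= p * e1 * q2) by (apply Rmult_le_compat_l; nra).
    assert (0 < q2 * ((1 - p) - e1 * (3 - p))) by (apply Rmult_lt_0_compat; nra).
    unfold gap2. nra.
  - assert (r1 * r2 = 0) by nra.
    right; right. unfold gap1, gap2. split; nra.
Qed.

Section AfterEntry.

Variables (p : R) (J : player -> bool) (tt : player -> Theta) (eps : player -> R).
Variables (b : bstrat) (s : sstrat).
Hypothesis p_range : 0 < p < 1.
Hypothesis eps_range : forall j, J j = true -> 0 < eps j < 1.
Hypothesis b_s_eq : is_eq p (post incumbents J tt eps) b s.

Notation mu' := (post incumbents J tt eps).
Notation F := (fitness G p mu' b s).
Notation avg := (avg_play p b s).

Lemma post_weights k : Esum (mu' k) (fun _ => 1) = 1.
Proof. apply post_weight; auto. Qed.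

Lemma post_avg_simplex th k : in_supp mu' th ->
  avg th k x1 = 1 - avg th k x2 /\ 0 <= avg th k x2 <= 1.
Proof.
  intros H. pose proof (eq_avg_in_simplex p _ b s th k ltac:(lra) b_s_eq H) as S.
  split; [apply in_simplex_x1 | apply in_simplex_x2]; exact S.
Qed.

Lemma post_avg_incumbent th k : in_supp mu' th -> tc th k = x1_dominant k -> avg th k x2 = 0.
Proof. intros H E. apply (eq_avg_x1_dominant p mu'); auto using post_weights. Qed.

Lemma post_balanced : (forall i, J i = true -> F i (x1_dominant i) = F i (tt i)) ->
  forall i t t', In t (supp (mu' i)) -> In t' (supp (mu' i)) -> F i t = F i t'.
Proof.
  intros E i t t' H H'.
  destruct (post_supp_cases J tt eps i t H) as [->|[Ji ->]],
           (post_supp_cases J tt eps i t' H') as [->|[Ji' ->]];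
    auto; symmetry; auto.
Qed.

Lemma single_entry_fitness i : J i = true -> J (other i) = false ->
  F i (tt i) <= F i (x1_dominant i).
Proof.
  intros Ji Jo. rewrite !fitness_vs_incumbents by exact Jo.
  set (d := x1_dominant (other i)).
  assert (Hd : In d (supp (mu' (other i)))) by apply In_post_incumbent.
  assert (Sm : in_supp mu' (tpair i (tt i) d)) by auto using in_supp_tpair, In_post_entrant.
  assert (Si : in_supp mu' (tpair i (x1_dominant i) d))
    by auto using in_supp_tpair, In_post_incumbent.
  assert (Zi : forall k, avg (tpair i (x1_dominant i) d) k x2 = 0).
  { intro k. apply post_avg_incumbent; [exact Si|]. destruct i, k; reflexivity. }
  assert (Zm : avg (tpair i (tt i) d) (other i) x2 = 0)
    by (apply post_avg_incumbent; [exact Sm | apply tc_tpair_other]).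
  destruct (post_avg_simplex _ P1 Sm), (post_avg_simplex _ P2 Sm),
    (post_avg_simplex _ P1 Si), (post_avg_simplex _ P2 Si).
  rewrite !(ext_G_pure_x1 i (other i)) by auto. rewrite !Zi. lra.
Qed.

Lemma post_in_supp t1 t2 : In t1 (supp (mu' P1)) -> In t2 (supp (mu' P2)) ->
  in_supp mu' (t1, t2).
Proof. intros H1 H2 []; assumption. Qed.

Lemma post_avg_incumbent_P1 t2 : In t2 (supp (mu' P2)) -> avg (x1_dominant P1, t2) P1 x2 = 0.
Proof.
  intros H. apply post_avg_incumbent; [|reflexivity].
  auto using post_in_supp, In_post_incumbent.
Qed.

Lemma post_avg_incumbent_P2 t1 : In t1 (supp (mu' P1)) -> avg (t1, x1_dominant P2) P2 x2 = 0.
Proof.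
  intros H. apply post_avg_incumbent; [|reflexivity].
  auto using post_in_supp, In_post_incumbent.
Qed.

Lemma double_entry_cap : J P1 = true -> J P2 = true ->
  avg (tt P1, tt P2) P2 x2 <= p + avg (x1_dominant P1, tt P2) P2 x2.
Proof.
  intros J1 J2. destruct b_s_eq as [Ho _].
  pose proof (In_post_entrant J tt eps P2 J2) as M2.
  destruct (Ho _ _ (In_post_entrant J tt eps P1 J1) M2 P2) as [[? [? ?]] _].
  destruct (Ho _ _ (In_post_incumbent J tt eps P1) M2 P2) as [[_ [? _]] _].
  apply avg_play_cap; [lra | reflexivity | lra | assumption].
Qed.

Lemma double_entry_fitness : J P1 = true -> J P2 = true ->
  eps P1 < (1 - p) / 4 -> eps P2 < 1 / 2 ->
  F P1 (x1_dominant P1) > F P1 (tt P1) \/ F P2 (x1_dominant P2) > F P2 (tt P2) \/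
  (F P1 (x1_dominant P1) = F P1 (tt P1) /\ F P2 (x1_dominant P2) = F P2 (tt P2)).
Proof.
  intros J1 J2 He1 He2.
  pose proof (eps_range P1 J1). pose proof (eps_range P2 J2).
  pose proof (In_post_incumbent J tt eps P1) as D1.
  pose proof (In_post_incumbent J tt eps P2) as D2.
  pose proof (In_post_entrant J tt eps P1 J1) as M1.
  pose proof (In_post_entrant J tt eps P2 J2) as M2.
  pose proof (double_entry_cap J1 J2) as Cap.
  rewrite !fitness_vs_entrants by assumption. cbn [other tpair].
  pose proof (post_in_supp _ _ D1 M2) as DM. pose proof (post_in_supp _ _ M1 D2) as MD.
  pose proof (post_in_supp _ _ M1 M2) as MM. pose proof (post_in_supp _ _ D1 D2) as DD.
  destruct (post_avg_simplex _ P1 DM), (post_avg_simplex _ P2 DM),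
    (post_avg_simplex _ P1 MD), (post_avg_simplex _ P2 MD),
    (post_avg_simplex _ P1 MM), (post_avg_simplex _ P2 MM),
    (post_avg_simplex _ P1 DD), (post_avg_simplex _ P2 DD).
  rewrite !ext_G_P1, !ext_G_P2 by assumption.
  rewrite !post_avg_incumbent_P1, !post_avg_incumbent_P2 by assumption.
  destruct (mutant_fitness_gaps p (eps P1) (eps P2)
    (avg (tt P1, x1_dominant P2) P1 x2) (avg (x1_dominant P1, tt P2) P2 x2)
    (avg (tt P1, tt P2) P1 x2) (avg (tt P1, tt P2) P2 x2)) as [G1|[G2|[G1 G2]]]; lra.
Qed.

Let outcome : Prop :=
  (exists j, J j = true /\
     forall tj, In tj (supp (incumbents j)) -> F j tj > F j (tt j)) \/
  (forall i t t', In t (supp (mu' i)) -> In t' (supp (mu' i)) -> F i t = F i t').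

Lemma incumbent_outperforms j : J j = true -> F j (x1_dominant j) > F j (tt j) -> outcome.
Proof. intros Jj H. left. exists j. split; [exact Jj|]. intros tj [<-|[]]. exact H. Qed.

Lemma single_entry_outcome i : J i = true -> J (other i) = false -> outcome.
Proof.
  intros Ji Jo. destruct (Rle_lt_or_eq_dec _ _ (single_entry_fitness i Ji Jo)) as [Hlt|Heq].
  - now apply (incumbent_outperforms i).
  - right. apply post_balanced. intros k Jk.
    destruct (player_eq_or_other k i) as [->| ->]; [now symmetry | congruence].
Qed.

Lemma entry_outcome : (exists j, J j = true) ->
  (forall j, J j = true -> eps j < (1 - p) / 4) -> outcome.
Proof.
  intros [j Jj] Hsmall.
  destruct (J P1) eqn:J1, (J P2) eqn:J2.
  - assert (eps P2 < 1 / 2) by (specialize (Hsmall P2 J2); lra).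
    destruct (double_entry_fitness J1 J2 (Hsmall P1 J1) ltac:(assumption))
      as [W1|[W2|[E1 E2]]].
    + exact (incumbent_outperforms P1 J1 W1).
    + exact (incumbent_outperforms P2 J2 W2).
    + right. apply post_balanced. intros [] _; assumption.
  - exact (single_entry_outcome P1 J1 J2).
  - exact (single_entry_outcome P2 J2 J1).
  - destruct j; congruence.
Qed.

End AfterEntry.

(** * Stability of the incumbents *)

Lemma incumbents_stable p : 0 < p < 1 -> stable G p incumbents b_x1 s_x1.
Proof.
  intros Hp. split; [apply incumbents_balanced|].
  intros J tt Hentry Hnew eta Heta.
  assert (tt_new : forall j, J j = true -> tt j <> x1_dominant j)
    by (intros j Jj E; apply (Hnew j Jj); rewrite E; left; reflexivity).
  set (epsb := Rmin ((1 - p) / 4) (Rmin (entry_tolerance tt P1) (entry_tolerance tt P2))).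
  assert (Hb1 : epsb <= (1 - p) / 4) by apply Rmin_l.
  assert (Hb2 : forall k, epsb <= entry_tolerance tt k).
  { intros []; eapply Rle_trans; [apply Rmin_r | apply Rmin_l | apply Rmin_r | apply Rmin_r]. }
  assert (Hb0 : 0 < epsb).
  { pose proof (entry_tolerance_pos tt P1); pose proof (entry_tolerance_pos tt P2).
    apply Rmin_pos; [lra | apply Rmin_pos; lra]. }
  exists 0, epsb. split; [lra|]. split; [lra|].
  intros eps Hr Hs. split.
  - destruct (mutual_weights_exist p tt) as [w [Hw Bw]].
    exists (b_post tt w), (s_post tt w).
    apply post_entry_nearby; auto.
    intros j k Jj. specialize (Hs j Jj). specialize (Hb2 k). lra.
  - intros b' s' [Heq _]. apply entry_outcome; auto.
    intros j Jj. specialize (Hs j Jj). lra.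
Qed.

Theorem mainTheorem18 : forall p : R, 0 < p < 1 -> stable_pure G p x1 x1.
Proof.
  intros p Hp. exists incumbents, b_x1, s_x1.
  split; [exact incumbents_valid|].
  split; [apply incumbents_eq|].
  split; [now apply incumbents_stable|].
  apply incumbents_agg.
Qed.
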